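(* Let $(X,\|\cdot,\cdot\|)$ be a $2$-normed space, $f:X\to X$, and $x_0\in X$. Suppose that for every sequence $(x_n)$ in $X$ which statistically converges to $x_0$, the sequence $(f(x_n))$ converges to $f(x_0)$. Then $f$ is a constant function.
   Context: A $2$-normed space is a real linear space $X$ with $\dim X>1$ together with a function $\|\cdot,\cdot\|:X^2\to\mathbb{R}$ such that for all $x,y,z\in X$, $\alpha\in\mathbb{R}$: (1) $\|x,y\|=0$ iff $x,y$ are linearly dependent; (2) $\|x,y\|=\|y,x\|$; (3) $\|\alpha x,y\|=|\alpha|\|x,y\|$; (4) $\|x,y+z\|\le\|x,y\|+\|x,z\|$. A sequence $(x_n)$ in $X$ converges to $x\in X$ if $\lim_{n\to\infty}\|x_n-x,z\|=0$ for every $z\in X$. A sequence $(x_k)$ in $X$ statistically converges to $L\in X$ if for every $\epsilon>0$ and every $z\in X$, $\lim_{n\to\infty}\frac1n|\{k\le n:\|x_k-L,z\|\ge\epsilon\}|=0$. *)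

From Stdlib Require Import Reals List.
Open Scope R_scope.

Record RLinSpace := {
  V :> Type;
  vadd : V -> V -> V;
  vzero : V;
  vopp : V -> V;
  vscal : R -> V -> V;
  vadd_assoc : forall x y z, vadd x (vadd y z) = vadd (vadd x y) z;
  vadd_comm : forall x y, vadd x y = vadd y x;
  vadd_0 : forall x, vadd x vzero = x;
  vadd_opp : forall x, vadd x (vopp x) = vzero;
  vscal_assoc : forall a b x, vscal a (vscal b x) = vscal (a * b) x;
  vscal_1 : forall x, vscal 1 x = x;
  vscal_distr_v : forall a x y, vscal a (vadd x y) = vadd (vscal a x) (vscal a y);
  vscal_distr_s : forall a b x, vscal (a + b) x = vadd (vscal a x) (vscal b x)
}.

Definition vsub (X : RLinSpace) (x y : X) : X := vadd X x (vopp X y).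

Definition lin_dep (X : RLinSpace) (x y : X) : Prop :=
  exists a b : R, (a <> 0 \/ b <> 0) /\ vadd X (vscal X a x) (vscal X b y) = vzero X.

Definition dim_gt1 (X : RLinSpace) : Prop :=
  exists x y : X, ~ lin_dep X x y.

Definition is_2norm (X : RLinSpace) (N : X -> X -> R) : Prop :=
  (forall x y, N x y = 0 <-> lin_dep X x y) /\
  (forall x y, N x y = N y x) /\
  (forall (a : R) x y, N (vscal X a x) y = Rabs a * N x y) /\
  (forall x y z, N x (vadd X y z) <= N x y + N x z).

Definition conv2 (X : RLinSpace) (N : X -> X -> R) (u : nat -> X) (l : X) : Prop :=
  forall z : X, Un_cv (fun n => N (vsub X (u n) l) z) 0.

Fixpoint count_lt (P : nat -> Prop) (dec : forall k, {P k} + {~ P k}) (n : nat) : nat :=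
  match n with
  | O => O
  | S m => (if dec m then 1 else 0) + count_lt P dec m
  end%nat.

Definition stat_conv2 (X : RLinSpace) (N : X -> X -> R) (u : nat -> X) (l : X) : Prop :=
  forall eps : R, eps > 0 -> forall z : X,
    Un_cv (fun n => INR (count_lt (fun k => N (vsub X (u k) l) z >= eps)
                                  (fun k => Rge_dec (N (vsub X (u k) l) z) eps)
                                  (S n)) / INR (S n)) 0.

From Stdlib Require Import Reals.
From Stdlib Require Import Lra Lia.
Open Scope R_scope.

(* The hypothesis forces f to be constant because statistical convergence
   ignores sets of natural density zero while ordinary convergence does not.
   Given any x, the sequence u equal to x at the perfect squares and to x0
   elsewhere statistically converges to x0, since the squares have density
   zero (there are at most sqrt n + 1 of them below n + 1).  Hence f (u k)
   converges to f x0; but f (u (m*m)) = f x for every m, so the value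
   ||f x - f x0, z|| is taken infinitely often by a sequence tending to 0 and
   must vanish for every z.  Axiom (1) of a 2-norm together with dim X > 1
   then gives f x = f x0. *)

Section LinearAlgebra.
Variable X : RLinSpace.

Lemma add_idem_zero (a : X) : vadd X a a = a -> a = vzero X.
Proof.
  intros H. transitivity (vadd X (vadd X a a) (vopp X a)).
  - rewrite <- vadd_assoc, vadd_opp, vadd_0; reflexivity.
  - rewrite H; apply vadd_opp.
Qed.

Lemma vscal_0_l (z : X) : vscal X 0 z = vzero X.
Proof. apply add_idem_zero; rewrite <- vscal_distr_s, Rplus_0_r; reflexivity. Qed.

Lemma vscal_0_r (c : R) : vscal X c (vzero X) = vzero X.
Proof. apply add_idem_zero; rewrite <- vscal_distr_v, vadd_0; reflexivity. Qed.

Lemma vopp_unique (p q : X) : vadd X p q = vzero X -> q = vopp X p.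
Proof.
  intros H. transitivity (vadd X (vopp X p) (vadd X p q)).
  - rewrite vadd_assoc, (vadd_comm X (vopp X p) p), vadd_opp, vadd_comm, vadd_0.
    reflexivity.
  - rewrite H, vadd_0; reflexivity.
Qed.

Lemma vscal_opp (a : R) (w : X) : vscal X (- a) w = vopp X (vscal X a w).
Proof. apply vopp_unique; rewrite <- vscal_distr_s, Rplus_opp_r; apply vscal_0_l. Qed.

Lemma vsub_eq0 (x y : X) : vsub X x y = vzero X -> x = y.
Proof.
  unfold vsub; intros H. transitivity (vadd X (vadd X x (vopp X y)) y).
  - rewrite <- vadd_assoc, (vadd_comm X (vopp X y) y), vadd_opp, vadd_0; reflexivity.
  - rewrite H, vadd_comm, vadd_0; reflexivity.
Qed.

Lemma vsub_diag (x : X) : vsub X x x = vzero X.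
Proof. apply vadd_opp. Qed.

Lemma lin_dep_zero_l (z : X) : lin_dep X (vzero X) z.
Proof.
  exists 1, 0; split; [left; lra|].
  rewrite vscal_0_l, vscal_0_r, vadd_0; reflexivity.
Qed.

Lemma lin_dep_cases (w a : X) :
  lin_dep X w a -> w = vzero X \/ exists c, a = vscal X c w.
Proof.
  intros [al [be [Hne H]]]. destruct (Req_dec be 0) as [Hb|Hb].
  - subst be. rewrite vscal_0_l, vadd_0 in H. left.
    assert (Ha : al <> 0) by (destruct Hne; lra).
    rewrite <- (vscal_1 X w), <- (Rinv_l al Ha), <- vscal_assoc, H, vscal_0_r.
    reflexivity.
  - right. exists (- al / be). apply vopp_unique in H.
    rewrite <- (vscal_1 X a), <- (Rinv_l be Hb), <- vscal_assoc, H, <- vscal_opp,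
      vscal_assoc.
    f_equal. field. exact Hb.
Qed.

Lemma dep_with_all_zero (w : X) :
  dim_gt1 X -> (forall z, lin_dep X w z) -> w = vzero X.
Proof.
  intros [a [b Hab]] Hw.
  destruct (lin_dep_cases w a (Hw a)) as [|[c Hc]]; auto.
  destruct (lin_dep_cases w b (Hw b)) as [|[d Hd]]; auto.
  exfalso; apply Hab; subst a b. destruct (Req_dec c 0) as [Hc0|Hc0].
  - subst c. exists 1, 0. split; [left; lra|].
    rewrite !vscal_0_l, vscal_0_r, vadd_0; reflexivity.
  - exists d, (- c). split; [right; lra|].
    rewrite !vscal_assoc, <- vscal_distr_s.
    replace (d * c + - c * d) with 0 by ring. apply vscal_0_l.
Qed.

Section TwoNormZero.
Variable N : X -> X -> R.
Hypothesis HN0 : forall x y, N x y = 0 <-> lin_dep X x y.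

Lemma norm2_zero_l (z : X) : N (vzero X) z = 0.
Proof. apply HN0, lin_dep_zero_l. Qed.

Lemma norm2_vanish (w : X) :
  dim_gt1 X -> (forall z, N w z = 0) -> w = vzero X.
Proof. intros Hdim Hw. apply dep_with_all_zero; [exact Hdim|]. intros z; apply HN0, Hw. Qed.
End TwoNormZero.
End LinearAlgebra.

Definition density0 (P : nat -> bool) : Prop :=
  Un_cv (fun n => INR (count_lt (fun k => P k = true)
                                (fun k => Bool.bool_dec (P k) true) (S n)) / INR (S n)) 0.

Lemma count_lt_mono (P Q : nat -> Prop) dp dq n :
  (forall k, P k -> Q k) -> (count_lt P dp n <= count_lt Q dq n)%nat.
Proof.
  intros H. induction n as [|n IH]; simpl; [lia|].
  destruct (dp n), (dq n); try lia. exfalso; auto.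
Qed.

Definition is_square (k : nat) : bool := Nat.eqb (Nat.sqrt k * Nat.sqrt k) k.

Lemma is_square_sq (m : nat) : is_square (m * m) = true.
Proof. unfold is_square. rewrite Nat.sqrt_square. apply PeanoNat.Nat.eqb_refl. Qed.

Lemma count_squares (n : nat) :
  (count_lt (fun k => is_square k = true)
            (fun k => Bool.bool_dec (is_square k) true) (S n) <= S (Nat.sqrt n))%nat.
Proof.
  induction n as [|n IH]; simpl in *.
  - destruct (Bool.bool_dec (is_square 0) true); simpl; lia.
  - destruct (Bool.bool_dec (is_square (S n)) true) as [Hsq|Hsq].
    + unfold is_square in Hsq. apply PeanoNat.Nat.eqb_eq in Hsq.
      pose proof (Nat.sqrt_spec n (le_0_n n)).
      assert (Nat.sqrt n < Nat.sqrt (S n))%nat by nia. lia.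
    + pose proof (Nat.sqrt_le_mono n (S n) ltac:(lia)). lia.
Qed.

(* If c <= e * y failed, then c^2 >= e^2 y^2 > 2 y, contradicting c^2 <= 2 y. *)
Lemma ratio_small (c y e : R) :
  0 <= c -> 0 < y -> 0 < e -> c * c <= 2 * y -> y * (e * e) > 2 -> c / y < e.
Proof.
  intros Hc Hy He Hcy Hye.
  apply (Rmult_lt_reg_r y); [exact Hy|].
  unfold Rdiv. rewrite Rmult_assoc, Rinv_l, Rmult_1_r by lra.
  destruct (Rlt_le_dec c (e * y)) as [h|h]; [exact h|].
  exfalso. assert (c * c >= (e * y) * (e * y)) by (apply Rle_ge, Rmult_le_compat; nra).
  nra.
Qed.

(* A counting sequence bounded by sqrt n + 1 has density zero, since
   (c n / (n+1))^2 <= 2 / (n+1). *)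
Lemma sqrt_bounded_ratio_cv0 (c : nat -> nat) :
  (forall n, (c n <= S (Nat.sqrt n))%nat) -> Un_cv (fun n => INR (c n) / INR (S n)) 0.
Proof.
  intros Hc e He.
  destruct (archimed_cor1 (e * e / 2)) as [M [HM HM0]]; [nra|].
  exists M. intros n Hn. unfold R_dist. rewrite Rminus_0_r.
  assert (Hsq : (c n * c n <= 2 * S n)%nat).
  { pose proof (Nat.sqrt_spec n (le_0_n n)). specialize (Hc n).
    assert (c n * c n <= S (Nat.sqrt n) * S (Nat.sqrt n))%nat
      by (apply PeanoNat.Nat.mul_le_mono; lia).
    nia. }
  apply le_INR in Hsq. rewrite !mult_INR in Hsq. simpl (INR 2) in Hsq.
  assert (Hy : 0 < INR (S n)) by (apply lt_0_INR; lia).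
  assert (HMy : INR M < INR (S n)) by (apply lt_INR; lia).
  assert (HM' : 0 < INR M) by (apply lt_0_INR; lia).
  assert (Hinv : / INR (S n) < e * e / 2)
    by (apply Rlt_trans with (/ INR M); [apply Rinv_lt_contravar; nra | exact HM]).
  assert (Hye : INR (S n) * (e * e) > 2).
  { apply (Rmult_lt_compat_l (INR (S n))) in Hinv; [|lra].
    rewrite Rinv_r in Hinv; lra. }
  pose proof (pos_INR (c n)).
  rewrite Rabs_pos_eq by (apply Rmult_le_pos; [lra | left; apply Rinv_0_lt_compat; lra]).
  apply ratio_small; lra.
Qed.

Lemma squares_density0 : density0 is_square.
Proof. apply sqrt_bounded_ratio_cv0, count_squares. Qed.

(* A sequence equal to its limit outside a density-zero set statistically
   converges to it: the exceptional indices k (with ||u k - l, z|| >= eps)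
   all lie in the density-zero set. *)
Lemma stat_conv2_off_density0 (X : RLinSpace) (N : X -> X -> R)
  (HN0 : forall x y, N x y = 0 <-> lin_dep X x y)
  (P : nat -> bool) (u : nat -> X) (l : X) :
  density0 P -> (forall k, P k = false -> u k = l) -> stat_conv2 X N u l.
Proof.
  intros HP Hu eps Heps z e He. destruct (HP e He) as [M HM]. exists M. intros n Hn.
  specialize (HM n Hn). unfold R_dist in *. rewrite Rminus_0_r in *.
  rewrite Rabs_pos_eq in * by
    (apply Rmult_le_pos; [apply pos_INR | left; apply Rinv_0_lt_compat, lt_0_INR; lia]).
  eapply Rle_lt_trans; [|exact HM].
  apply Rmult_le_compat_r; [left; apply Rinv_0_lt_compat, lt_0_INR; lia|].
  apply le_INR, count_lt_mono. intros k Hk.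
  destruct (P k) eqn:E; [reflexivity|]. exfalso.
  rewrite (Hu k E), vsub_diag, norm2_zero_l in Hk by exact HN0. lra.
Qed.

Lemma cv0_frequent_value (a : nat -> R) (r : R) :
  Un_cv a 0 -> (forall M, exists n, (n >= M)%nat /\ a n = r) -> r = 0.
Proof.
  intros Ha Hr. destruct (Req_dec r 0) as [|Hr0]; [assumption|]. exfalso.
  destruct (Ha (Rabs r)) as [M HM]; [apply Rabs_pos_lt, Hr0|].
  destruct (Hr M) as [n [Hn Han]]. specialize (HM n Hn).
  unfold R_dist in HM. rewrite Rminus_0_r, Han in HM. lra.
Qed.

Theorem theorem3p2 (X : RLinSpace) (N : X -> X -> R)
  (HdimX : dim_gt1 X) (HN : is_2norm X N) (f : X -> X) (x0 : X) :
  (forall u : nat -> X, stat_conv2 X N u x0 -> conv2 X N (fun n => f (u n)) (f x0)) ->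
  forall x y : X, f x = f y.
Proof.
  intros Hf.
  destruct HN as [HN0 _].
  assert (Hconst : forall x, f x = f x0).
  { intros x.
    set (u := fun k => if is_square k then x else x0).
    assert (Hstat : stat_conv2 X N u x0).
    { apply (stat_conv2_off_density0 X N HN0 is_square); [exact squares_density0|].
      intros k Hk; unfold u; rewrite Hk; reflexivity. }
    apply vsub_eq0, (norm2_vanish X N HN0); [exact HdimX|]. intros z.
    apply (cv0_frequent_value _ _ (Hf u Hstat z)). intros M.
    exists (S M * S M)%nat. split; [nia|].
    unfold u. rewrite is_square_sq. reflexivity. }
  intros x y. rewrite (Hconst x), (Hconst y). reflexivity.
Qed.
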